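(* Let $\lambda=(\lambda_1,\dots,\lambda_N)$ be a partition. The map sending a column-strict tableau $\emptyset=\lambda^{(0)}\subset\lambda^{(1)}\subset\dots\subset\lambda^{(N)}=\lambda$ of shape $\lambda$ to the matrix $\theta$ with $\theta_{i,j}=\lambda^{(j)}_i-\lambda^{(j-1)}_i$ for $i<j$ and $\theta_{i,j}=0$ for $i\ge j$ is a bijection from the set of column-strict tableaux of shape $\lambda$ onto $$\mathsf{Pol}_\lambda=\Big\{\theta\in\mathsf M^{(N)}:0\le\theta_{i,j}\le\lambda_i-\lambda_{i+1}-\sum_{k=j+1}^N(\theta_{i,k}-\theta_{i+1,k})\Big\}.$$
   Context: A column-strict tableau of shape $\lambda$ is a sequence of partitions $\emptyset=\lambda^{(0)}\subset\dots\subset\lambda^{(N)}=\lambda$ such that each skew diagram $\lambda^{(k)}-\lambda^{(k-1)}$ is a horizontal strip (i.e. $\lambda^{(k)}_1\ge\lambda^{(k-1)}_1\ge\lambda^{(k)}_2\ge\lambda^{(k-1)}_2\ge\dots$). $\mathsf M^{(N)}$ is the set of $N\times N$ matrices with entries in $\mathbb Z_{\ge0}$ that vanish on and below the diagonal. $\lambda_{N+1}=0$. *)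

From mathcomp Require Import all_boot all_order all_algebra.
Set Implicit Arguments. Unset Strict Implicit. Unset Printing Implicit Defensive.
Import Order.TTheory GRing.Theory Num.Theory.

(* The paper's lambda_i (1-based) is [part lambda (i-1)]. *)
Definition is_partition (s : seq nat) : bool :=
  sorted geq s && all (fun x => 0 < x) s.

Definition part (s : seq nat) (i : nat) : nat := nth 0 s i.

Definition horizontal_strip (mu nu : seq nat) : Prop :=
  forall i, part mu i <= part nu i /\ part nu i.+1 <= part mu i.

Definition cst (N : nat) (lam : seq nat) (T : seq (seq nat)) : Prop :=
  [/\ size T = N.+1,
      nth [::] T 0 = [::],
      nth [::] T N = lam,
      (forall k, k <= N -> is_partition (nth [::] T k))
      & (forall k, 0 < k <= N -> horizontal_strip (nth [::] T k.-1) (nth [::] T k))].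

(* The map tableau -> matrix (0-based indices i, j < N correspond to the
   paper's i+1, j+1):  theta_{i,j} = lambda^(j+1)_i - lambda^(j)_i for i < j,
   and 0 on and below the diagonal. *)
Definition theta_of (N : nat) (T : seq (seq nat)) : 'M[nat]_N :=
  \matrix_(i < N, j < N)
    (if (i < j)%N then part (nth [::] T j.+1) i - part (nth [::] T j) i else 0%N).

Definition ment (N : nat) (th : 'M[nat]_N) (i j : nat) : nat :=
  match @insub nat (fun k => k < N) 'I_N i, @insub nat (fun k => k < N) 'I_N j with
  | Some i', Some j' => th i' j'
  | _, _ => 0%N
  end.

Definition strict_upper (N : nat) (th : 'M[nat]_N) : Prop :=
  forall i j : 'I_N, (j <= i)%N -> th i j = 0%N.

Local Open Scope ring_scope.

Definition Pol (N : nat) (lam : seq nat) (th : 'M[nat]_N) : Prop :=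
  strict_upper th /\
  forall i j : nat, (i < N)%N -> (j < N)%N -> (i < j)%N ->
    (ment th i j)%:Z <=
      (part lam i)%:Z - (part lam i.+1)%:Z
      - \sum_(j.+1 <= k < N) ((ment th i k)%:Z - (ment th i.+1 k)%:Z).

From mathcomp Require Import all_boot all_order all_algebra zify.
Import Order.TTheory GRing.Theory Num.Theory.
Local Open Scope ring_scope.
Set Implicit Arguments. Unset Strict Implicit.

(* Row i of theta records the increments of the i-th part along the chain, so
   the tail sum [row_tail th i j = sum_(k >= j) theta_(i,k)] telescopes to
   lambda_i - lambda^(j)_i.  Hence a tableau is recovered from its matrix by
   lambda^(j)_i = lambda_i - row_tail th i j (for i < j), and in terms of these
   tails the interlacing lambda^(j+1)_(i+1) <= lambda^(j)_i of a horizontal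
   strip is exactly the defining inequality of Pol_lambda. *)

Lemma mentE N (th : 'M[nat]_N) i j (hi : (i < N)%N) (hj : (j < N)%N) :
  ment th i j = th (Ordinal hi) (Ordinal hj).
Proof. by rewrite /ment (insubT (fun k => (k < N)%N) hi) (insubT (fun k => (k < N)%N) hj). Qed.

Lemma mentO N (th : 'M[nat]_N) (i j : 'I_N) : ment th i j = th i j.
Proof. by rewrite /ment !valK. Qed.

Lemma Posz_sum m n (F : nat -> nat) :
  ((\sum_(m <= k < n) F k)%N)%:Z = \sum_(m <= k < n) (F k)%:Z.
Proof. exact: (big_morph Posz PoszD (erefl _)). Qed.

Lemma part_gt0 s i : is_partition s -> (i < size s)%N -> (0 < part s i)%N.
Proof. by case/andP=> _ /all_nthP H Hi; apply: H. Qed.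

Lemma size_part_le s t : is_partition s -> (forall i, part s i = part t i) ->
  (size s <= size t)%N.
Proof.
move=> Hs E; rewrite leqNgt; apply/negP => Hlt.
by have := part_gt0 Hs Hlt; rewrite E /part nth_default.
Qed.

Lemma partition_part_inj s t : is_partition s -> is_partition t ->
  (forall i, part s i = part t i) -> s = t.
Proof.
move=> Hs Ht E; apply: (eq_from_nth (x0 := 0%N)) => [|i _]; last exact: E.
by apply/eqP; rewrite eqn_leq !size_part_le.
Qed.

Fixpoint mkpart (g : nat -> nat) (k : nat) : seq nat :=
  if k is k'.+1 then (if (0 < g 0)%N then g 0 :: mkpart (fun i => g i.+1) k' else [::])
  else [::].

Lemma noninc_eq0 (g : nat -> nat) : (forall i, (g i.+1 <= g i)%N) -> g 0 = 0%N ->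
  forall i, g i = 0%N.
Proof. by move=> Hg H0; elim=> // i IH; have := Hg i; rewrite IH; lia. Qed.

Lemma mkpartP k g : (forall i, (g i.+1 <= g i)%N) -> g k = 0%N ->
  is_partition (mkpart g k) /\ forall i, part (mkpart g k) i = g i.
Proof.
elim: k g => [|k IH] g Hg Hk /=.
  by split=> // i; rewrite /part nth_nil (noninc_eq0 Hg Hk).
case: ifP => Hg0; last first.
  have H0 : g 0 = 0%N by move/negbT: Hg0; rewrite -leqNgt leqn0 => /eqP.
  by split=> // i; rewrite /part nth_nil (noninc_eq0 Hg H0).
have [Hp Hpart] := IH (fun i => g i.+1) (fun i => Hg i.+1) Hk.
split; last by case.
move: Hp; rewrite /is_partition /= Hg0 => /andP[Hs Ha].
apply/andP; split=> //.
case E: (mkpart _ _) Hs Hpart => [|x s'] //= -> Hpart.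
by rewrite andbT; have := Hpart 0%N; rewrite /part /= => ->; apply: Hg.
Qed.

Definition row_tail N (th : 'M[nat]_N) i j := (\sum_(j <= k < N) ment th i k)%N.

Lemma row_tail_ltn N (th : 'M[nat]_N) i j : (j < N)%N ->
  row_tail th i j = (ment th i j + row_tail th i j.+1)%N.
Proof. by move=> Hj; rewrite /row_tail big_ltn. Qed.

Lemma row_tail_N N (th : 'M[nat]_N) i : row_tail th i N = 0%N.
Proof. by rewrite /row_tail big_geq. Qed.

Lemma Pol_row_tailP N lam (th : 'M[nat]_N) :
  Pol lam th <-> strict_upper th /\
    forall i j, (i < j)%N -> (j < N)%N ->
      (part lam i.+1 + row_tail th i j <= part lam i + row_tail th i.+1 j.+1)%N.
Proof.
have E i j : (i < j)%N -> (j < N)%N ->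
    ((ment th i j)%:Z <= (part lam i)%:Z - (part lam i.+1)%:Z
      - \sum_(j.+1 <= k < N) ((ment th i k)%:Z - (ment th i.+1 k)%:Z)) =
    (part lam i.+1 + row_tail th i j <= part lam i + row_tail th i.+1 j.+1)%N.
  move=> Hij Hj; rewrite sumrB -!Posz_sum -/(row_tail th i j.+1).
  rewrite -/(row_tail th i.+1 j.+1) (row_tail_ltn _ _ Hj); apply/idP/idP; lia.
split=> [[Hsu Hpol]|[Hsu Hpol]]; split=> // i j.
  by move=> Hij Hj; rewrite -E // Hpol // (ltn_trans Hij).
by move=> _ Hj Hij; rewrite E // Hpol.
Qed.

Definition shape_of N lam (th : 'M[nat]_N) k i :=
  if (i < k)%N then (part lam i - row_tail th i k)%N else 0%N.

Definition tableau_of N lam (th : 'M[nat]_N) : seq (seq nat) :=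
  mkseq (fun k => mkpart (shape_of lam th k) k) N.+1.

Section Tableau.
Variables (N : nat) (lam : seq nat) (T : seq (seq nat)).
Hypothesis HT : cst N lam T.
Let P k i := part (nth [::] T k) i.

Lemma cst_part_leS k i : (k < N)%N -> (P k i <= P k.+1 i)%N.
Proof. by case: HT => _ _ _ _ H Hk; case: (H k.+1 Hk i). Qed.

Lemma cst_interlace k i : (k < N)%N -> (P k.+1 i.+1 <= P k i)%N.
Proof. by case: HT => _ _ _ _ H Hk; case: (H k.+1 Hk i). Qed.

Lemma cst_part_le k l i : (k <= l <= N)%N -> (P k i <= P l i)%N.
Proof.
elim: l => [|l IH]; first by rewrite leqn0 => /andP[/eqP ->].
case/andP; rewrite leq_eqVlt => /orP[/eqP <- //|Hkl] HlN.
by apply: leq_trans (IH _) (cst_part_leS _ HlN); rewrite -ltnS Hkl ltnW.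
Qed.

Lemma cst_part_eq0 k i : (k <= N)%N -> (k <= i)%N -> P k i = 0%N.
Proof.
elim: k i => [|k IH] i HkN Hki.
  by case: HT => _ H0 _ _ _; rewrite /P H0 /part nth_nil.
case: i Hki => // i Hki; have := cst_interlace i HkN.
by rewrite (IH i (ltnW HkN) Hki); lia.
Qed.

Lemma cst_part_N i : P N i = part lam i.
Proof. by case: HT => _ _ E; rewrite /P E. Qed.

Lemma row_tail_theta i j : (i < j <= N)%N ->
  row_tail (theta_of N T) i j = (part lam i - P j i)%N.
Proof.
case/andP=> Hij HjN; rewrite -cst_part_N /row_tail.
rewrite (@eq_big_nat _ _ _ _ _ _ (fun k => P k.+1 i - P k i)%N); last first.
  move=> k /andP[Hjk HkN]; have Hik := leq_trans Hij Hjk.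
  by rewrite (mentE _ (ltn_trans Hik HkN) HkN) mxE /= Hik.
apply: (telescope_sumn_in (f := P^~ i)) => // k /andP[_ Hk].
exact: cst_part_leS.
Qed.

Lemma cst_part_shape k i : (k <= N)%N -> P k i = shape_of lam (theta_of N T) k i.
Proof.
move=> HkN; rewrite /shape_of; case: ltnP => Hik; last exact: cst_part_eq0.
rewrite row_tail_theta ?Hik // -cst_part_N.
have := @cst_part_le k N i; rewrite HkN leqnn; lia.
Qed.

Lemma theta_of_Pol : Pol lam (theta_of N T).
Proof.
apply/Pol_row_tailP; split=> [i j Hji|i j Hij Hj]; first by rewrite mxE ltnNge Hji.
rewrite !row_tail_theta ?ltnS ?Hij ?Hj ?(ltnW Hj) //.
have := cst_interlace i Hj; have := @cst_part_le j N i; have := @cst_part_le j.+1 N i.+1.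
rewrite (ltnW Hj) Hj !leqnn !cst_part_N. lia.
Qed.

End Tableau.

Lemma theta_of_inj N lam T1 T2 : cst N lam T1 -> cst N lam T2 ->
  theta_of N T1 = theta_of N T2 -> T1 = T2.
Proof.
move=> H1 H2 Hth; apply: (eq_from_nth (x0 := [::])).
  by case: H1 => ->; case: H2 => ->.
move: (H1) (H2) => [Hs1 _ _ Hp1 _] [_ _ _ Hp2 _] k; rewrite Hs1 ltnS => Hk.
apply: partition_part_inj; [exact: Hp1|exact: Hp2|] => i.
by rewrite (cst_part_shape H1) // (cst_part_shape H2) // Hth.
Qed.

Section Inverse.
Variables (N : nat) (lam : seq nat) (th : 'M[nat]_N).
Hypotheses (Hlam : is_partition lam) (Hsz : (size lam <= N)%N) (Hpol : Pol lam th).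

Let Hsu : strict_upper th := (proj1 (Pol_row_tailP _ _) Hpol).1.
Let Hstrip := (proj1 (Pol_row_tailP _ _) Hpol).2.

Lemma row_tail_le_part i j : (i < j <= N)%N -> (row_tail th i j <= part lam i)%N.
Proof.
move=> Hij; have [d Hd] : exists d, (j + d)%N = N by exists (N - j)%N; lia.
elim: d i j Hd Hij => [|d IH] i j Hd Hij.
  by rewrite addn0 in Hd; rewrite Hd row_tail_N.
have := IH i.+1 j.+1; have := @Hstrip i j; lia.
Qed.

Lemma shape_of_noninc k : (k <= N)%N -> forall i, (shape_of lam th k i.+1 <= shape_of lam th k i)%N.
Proof.
case: k => [|k] HkN i; rewrite /shape_of; case: ltnP => // Hik.
rewrite (ltn_trans (ltnSn i) Hik).
have := @Hstrip i k; have := row_tail_ltn th i HkN.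
have := @row_tail_le_part i k.+1; have := @row_tail_le_part i.+1 k.+1; lia.
Qed.

Lemma tableau_ofE k : (k <= N)%N ->
  is_partition (nth [::] (tableau_of lam th) k) /\
  forall i, part (nth [::] (tableau_of lam th) k) i = shape_of lam th k i.
Proof.
move=> HkN; rewrite nth_mkseq //.
by apply: mkpartP (shape_of_noninc HkN) _; rewrite /shape_of ltnn.
Qed.

Lemma tableau_of_cst : cst N lam (tableau_of lam th).
Proof.
split=> [|||k /tableau_ofE []//|k /andP[]].
- by rewrite size_mkseq.
- by rewrite nth_mkseq.
- have [Hp Hpart] := tableau_ofE (leqnn N).
  apply: partition_part_inj => // i; rewrite Hpart /shape_of row_tail_N subn0.
  by case: ltnP => // Hi; rewrite /part nth_default // (leq_trans Hsz).
case: k => // k _ HkN i.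
have [_ Ek] := tableau_ofE (ltnW HkN); have [_ Ek1] := tableau_ofE HkN.
rewrite !Ek !Ek1 /shape_of !ltnS; split.
- case: ifP => // Hik; rewrite (ltnW Hik).
  by have := row_tail_ltn th i HkN; lia.
case: ifP => // Hik; have := @Hstrip i k.
have := @row_tail_le_part i k; have := @row_tail_le_part i.+1 k.+1; lia.
Qed.

Lemma theta_of_tableau_of : theta_of N (tableau_of lam th) = th.
Proof.
apply/matrixP => i j; rewrite mxE.
case: ifP => Hij; last by rewrite Hsu // leqNgt Hij.
have [_ ->] := tableau_ofE (ltn_ord j); have [_ ->] := tableau_ofE (ltnW (ltn_ord j)).
rewrite /shape_of Hij (ltn_trans Hij) //.
have := row_tail_ltn th i (ltn_ord j); rewrite mentO.
have := @row_tail_le_part i j; rewrite Hij ltnW //; lia.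
Qed.

End Inverse.

Theorem lemma2p1 (N : nat) (lam : seq nat) :
  is_partition lam -> (size lam <= N)%N ->
  [/\ (forall T, cst N lam T -> Pol lam (theta_of N T)),
      (forall T1 T2, cst N lam T1 -> cst N lam T2 ->
          theta_of N T1 = theta_of N T2 -> T1 = T2)
    & (forall th : 'M[nat]_N, Pol lam th ->
          exists2 T, cst N lam T & theta_of N T = th)].
Proof.
move=> Hlam Hsz; split; first exact: theta_of_Pol; first exact: theta_of_inj.
move=> th Hpol; exists (tableau_of lam th).
- exact: tableau_of_cst.
- exact: theta_of_tableau_of.
Qed.
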